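(* Under the assumptions below, suppose $\mu$ is sufficiently large. The data $(X_i,U_i,\mathcal{E}_i)$ are informative for the cooperative output regulation problem if and only if, for every $i\in\{1,\dots,N\}$, there exists a right inverse $X_i^{+}$ of $X_i$ such that $(X_i\mathcal{D}_{11}-E_iV)X_i^{+}$ is stable, and the data-driven regulator equations $(X_i\mathcal{D}_{11}-E_iV)M_i=X_iM_iS-E_i$, $(\mathcal{E}_i-F_iV)M_i=-F_i$ have a solution $M_i$. Moreover, $K_{2i}$ can be computed as $K_{2i}=(U_i-K_{1i}X_i)M_i$.
   Context: Leader–follower multi-agent system with $N$ followers. Follower $i$: $\dot x_i=A_ix_i+B_iu_i+E_iv$, $e_i=C_ix_i+D_iu_i+F_iv$, with $x_i\in\mathbb{R}^{n_i}$, $e_i\in\mathbb{R}^{p}$; exosystem $\dot v=Sv$, $v\in\mathbb{R}^q$. $A_i,B_i,C_i,D_i$ unknown; $E_i,F_i,S$ known. Distributed controller: $u_i=K_{1i}x_i+K_{2i}\eta_i$, $\dot\eta_i=S\eta_i+\mu[\sum_j a_{ij}(\eta_j-\eta_i)+a_{i0}(v-\eta_i)]$, with $K_{1i}=U_iX_i^{+}$. Data: signals expanded in an orthogonal polynomial basis truncated at degree $N$; $X_i,U_i,\mathcal{E}_i,V$ are the matrices of the first $N+1$ coefficient vectors of $x_i,u_i,e_i,v$, and $\mathcal{D}_{11}$ is the leading $(N+1)\times(N+1)$ block of the basis differentiation matrix. Exact data: $X_i\mathcal{D}_{11}=A_iX_i+B_iU_i+E_iV$, $\mathcal{E}_i=C_iX_i+D_iU_i+F_iV$.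 The data are informative for cooperative output regulation if every system consistent with the data admits gains making the closed-loop matrix Hurwitz and the regulator equations $\Pi_iS=A_i\Pi_i+B_i\Gamma_i+E_i$, $0=C_i\Pi_i+D_i\Gamma_i+F_i$ (with $\Gamma_i=K_{1i}\Pi_i+K_{2i}$) solvable, so that $e(t)\to0$. Assumptions: $S$ has no eigenvalues with negative real part; the graph is unknown but contains a directed spanning tree rooted at the leader; nonzero Laplacian entries satisfy $\varepsilon_1\le|\mathcal{L}_{ij}|\le\varepsilon_2$. *)

(* Real scalars: an arbitrary real closed field R
   (e.g. the reals); eigenvalues live in its algebraic closure R[i]. *)
From HB Require Import structures.
From mathcomp Require Import all_boot all_order all_algebra.
From mathcomp Require Import complex.
Set Implicit Arguments. Unset Strict Implicit. Unset Printing Implicit Defensive.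
Import Order.TTheory GRing.Theory Num.Theory.
Local Open Scope ring_scope.

Definition is_eigenvalue (R : rcfType) (n : nat) (A : 'M[R]_n) (z : R[i]) :=
  root (map_poly (real_complex R) (char_poly A)) z.

(** Hurwitz (= stable, continuous time): every eigenvalue has negative real part. *)
Definition hurwitz (R : rcfType) (n : nat) (A : 'M[R]_n) :=
  forall z : R[i], is_eigenvalue A z -> complex.Re z < 0.

Definition no_stable_eig (R : rcfType) (n : nat) (A : 'M[R]_n) :=
  forall z : R[i], is_eigenvalue A z -> 0 <= complex.Re z.

(** Communication graph on N+1 nodes, node 0 = leader, node (lift ord0 i)
    = follower i.  [Ad k l] = a_{kl} is the weight with which node k uses
    the information of node l. *)
Definition aug_laplacian (R : rcfType) (N : nat) (Ad : 'M[R]_N.+1) : 'M[R]_N.+1 :=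
  \matrix_(k, l) ((k == l)%:R * (\sum_(l' < N.+1) Ad k l') - Ad k l).

(** Admissible (unknown) graphs: nonnegative weights, no self loops,
    the leader listens to nobody, a directed spanning tree rooted at the
    leader, and all nonzero Laplacian entries have modulus in [eps1, eps2]. *)
Definition admissible_graph (R : rcfType) (N : nat) (eps1 eps2 : R)
    (Ad : 'M[R]_N.+1) : Prop :=
  [/\ (forall k l, 0 <= Ad k l),
      (forall k, Ad k k = 0),
      (forall l, Ad ord0 l = 0),
      (forall k, connect (fun u v : 'I_N.+1 => 0 < Ad v u) ord0 k) &
      (forall k l, aug_laplacian Ad k l != 0 ->
         eps1 <= `|aug_laplacian Ad k l| <= eps2)].

(** H = L_followers + diag(a_{i0}) (the follower block of the augmented Laplacian). *)
Definition Hmat (R : rcfType) (N : nat) (Ad : 'M[R]_N.+1) : 'M[R]_N :=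
  \matrix_(i, j) aug_laplacian Ad (lift ord0 i) (lift ord0 j).

(** Closed-loop matrix of col(x_1..x_N, eta_1..eta_N) under
    u_i = K1_i x_i + K2_i eta_i,
    eta_i' = S eta_i + mu [sum_j a_ij (eta_j - eta_i) + a_i0 (v - eta_i)]. *)
Definition closed_loop (R : rcfType) (N q : nat) (n m : 'I_N -> nat)
    (A : forall i, 'M[R]_(n i)) (B : forall i, 'M[R]_(n i, m i))
    (K1 : forall i, 'M[R]_(m i, n i)) (K2 : forall i, 'M[R]_(m i, q))
    (S : 'M[R]_q) (mu : R) (Ad : 'M[R]_N.+1)
  : 'M[R]_((\sum_(i < N) n i) + (\sum_(i < N) q)) :=
  block_mx
    (\mxdiag_(i < N) (A i + B i *m K1 i))
    (\mxblock_(i < N, j < N) (if i == j then B i *m K2 i else 0 : 'M[R]_(n i, q)))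
    0
    (\mxblock_(i < N, j < N)
        ((i == j)%:R *: S - (mu * Hmat Ad i j) *: (1%:M : 'M[R]_q))).

Definition consistent (R : rcfType) (n m p q T : nat)
    (X : 'M[R]_(n, T)) (U : 'M[R]_(m, T)) (Ed : 'M[R]_(p, T))
    (V : 'M[R]_(q, T)) (D11 : 'M[R]_T) (E : 'M[R]_(n, q)) (F : 'M[R]_(p, q))
    (A : 'M[R]_n) (B : 'M[R]_(n, m)) (C : 'M[R]_(p, n)) (D : 'M[R]_(p, m)) :=
  X *m D11 = A *m X + B *m U + E *m V /\ Ed = C *m X + D *m U + F *m V.

Definition regulator_solvable (R : rcfType) (n m p q : nat)
    (A : 'M[R]_n) (B : 'M[R]_(n, m)) (C : 'M[R]_(p, n)) (D : 'M[R]_(p, m))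
    (E : 'M[R]_(n, q)) (F : 'M[R]_(p, q)) (S : 'M[R]_q)
    (K1 : 'M[R]_(m, n)) (K2 : 'M[R]_(m, q)) :=
  exists Pi : 'M[R]_(n, q),
    let Gamma := K1 *m Pi + K2 in
    Pi *m S = A *m Pi + B *m Gamma + E /\ 0 = C *m Pi + D *m Gamma + F.

Definition gains_work (R : rcfType) (N p q T : nat) (n m : 'I_N -> nat)
    (X : forall i, 'M[R]_(n i, T)) (U : forall i, 'M[R]_(m i, T))
    (Ed : forall i, 'M[R]_(p, T)) (V : 'M[R]_(q, T)) (D11 : 'M[R]_T)
    (E : forall i, 'M[R]_(n i, q)) (F : forall i, 'M[R]_(p, q)) (S : 'M[R]_q)
    (eps1 eps2 mu : R)
    (Xp : forall i, 'M[R]_(T, n i)) (K2 : forall i, 'M[R]_(m i, q)) : Prop :=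
  (forall i, X i *m Xp i = 1%:M) /\
  forall (Ad : 'M[R]_N.+1)
         (A : forall i, 'M[R]_(n i)) (B : forall i, 'M[R]_(n i, m i))
         (C : forall i, 'M[R]_(p, n i)) (D : forall i, 'M[R]_(p, m i)),
    admissible_graph eps1 eps2 Ad ->
    (forall i, consistent (X i) (U i) (Ed i) V D11 (E i) (F i) (A i) (B i) (C i) (D i)) ->
    hurwitz (closed_loop A B (fun i => U i *m Xp i) K2 S mu Ad) /\
    (forall i, regulator_solvable (A i) (B i) (C i) (D i) (E i) (F i) S
                 (U i *m Xp i) (K2 i)).

Definition informative (R : rcfType) (N p q T : nat) (n m : 'I_N -> nat)
    (X : forall i, 'M[R]_(n i, T)) (U : forall i, 'M[R]_(m i, T))
    (Ed : forall i, 'M[R]_(p, T)) (V : 'M[R]_(q, T)) (D11 : 'M[R]_T)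
    (E : forall i, 'M[R]_(n i, q)) (F : forall i, 'M[R]_(p, q)) (S : 'M[R]_q)
    (eps1 eps2 mu : R) : Prop :=
  exists (Xp : forall i, 'M[R]_(T, n i)) (K2 : forall i, 'M[R]_(m i, q)),
    gains_work X U Ed V D11 E F S eps1 eps2 mu Xp K2.

(* If X Xp = I, then for every plant (A, B, C, D) consistent with
   the data, (X D11 - E V) Xp = A + B (U Xp) is the closed-loop matrix of the
   plant, and M solves the data-driven regulator equations iff (X M, U M) solves
   the model ones; U M = K1 (X M) + K2 for K2 = (U - K1 X) M.  The observer block
   I (x) S - mu (H (x) I) is Hurwitz for every admissible graph once mu is large:
   the weights g = 1 - r^depth along a spanning tree of the graph make H strictly
   diagonally dominant, (H g)_i >= c > 0 with c depending only on N, eps1, eps2,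
   and a weighted Gershgorin estimate at an entry maximising |w| / g bounds every
   eigenvalue z by Re z * g_i <= s - mu c, where s = sum |S_kl|.  The Hurwitz condition comes from testing the gains on the star
   graph.  Let P = Y Y^+ project onto the range of Y = U - K1 X.  The plant
   (A + B (I - P) K1, B P, C + D (I - P) K1, D P) is still consistent with the
   data, so its regulator equations have a solution Pi, and
   M = Xp Pi + (I - Xp X) Y^+ K2 satisfies X M = Pi and U M = K1 Pi + P K2,
   which turns them into the data-driven equations for the true plant. *)

From HB Require Import structures.
From mathcomp Require Import all_boot all_order all_algebra.
From mathcomp Require Import complex.
From mathcomp Require Import ring lra.
Import Order.TTheory GRing.Theory Num.Theory.
Local Open Scope ring_scope.
Import ComplexField.Normc.
Set Implicit Arguments. Unset Strict Implicit. Unset Printing Implicit Defensive.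

Lemma char_poly_trmx (F : comNzRingType) n (A : 'M[F]_n) : char_poly A^T = char_poly A.
Proof.
by rewrite /char_poly -det_tr; congr (\det _); apply/matrixP=> i j; rewrite !mxE eq_sym.
Qed.

Lemma submxcolZ (R : pzRingType) n (p_ : 'I_n -> nat) m a (A : 'M[R]_(\sum_i p_ i, m)) i :
  submxcol (a *: A) i = a *: submxcol A i.
Proof. by apply/matrixP=> k l; rewrite !mxE. Qed.

Lemma submxcol_neq0 (V : nmodType) N (p_ : 'I_N -> nat) m (A : 'M[V]_(\sum_i p_ i, m)) :
  A != 0 -> exists i, submxcol A i != 0.
Proof.
move=> A0; apply/existsP; apply: contraR A0; rewrite negb_exists => /forallP Ai0.
by apply/eqP/mxcolP => i; rewrite submxcol0; apply/eqP/negPn.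
Qed.

Lemma matrix_neq0 (V : nmodType) m n (A : 'M[V]_(m, n)) : A != 0 -> exists i j, A i j != 0.
Proof.
move=> A0; have /existsP [i /existsP [j Aij]] : [exists i, exists j, A i j != 0].
  apply: contraR A0; rewrite negb_exists => /forallP A0.
  apply/eqP/matrixP => i j; rewrite mxE; apply/eqP.
  by move: (A0 i); rewrite negb_exists => /forallP /(_ j) /negPn.
by exists i, j.
Qed.

Section Spectrum.
Variable R : rcfType.
Local Notation C := R[i].
Local Notation rc := (real_complex R).

Lemma is_eigenvalueP n (A : 'M[R]_n) z :
  is_eigenvalue A z <-> exists2 w : 'cV[C]_n, map_mx rc A *m w = z *: w & w != 0.
Proof.
rewrite /is_eigenvalue map_char_poly -char_poly_trmx -eigenvalue_root_char.
split=> [/eigenvalueP [v vA v0] | [w Aw w0]].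
  by exists v^T; rewrite ?trmx_eq0 // -[_ *m _]trmxK trmx_mul trmxK vA linearZ.
by apply/eigenvalueP; exists w^T; rewrite ?trmx_eq0 // -trmx_mul Aw linearZ.
Qed.

Lemma map_mxblock (N : nat) (p_ q_ : 'I_N -> nat) (B : forall i j, 'M[R]_(p_ i, q_ j)) :
  map_mx rc (\mxblock_(i, j) B i j) = \mxblock_(i, j) map_mx rc (B i j).
Proof. by apply/matrixP=> a b; rewrite !mxE. Qed.

Lemma map_mxdiag N (p_ : 'I_N -> nat) (B : forall i, 'M[R]_(p_ i)) :
  map_mx rc (\mxdiag_i B i) = \mxdiag_i map_mx rc (B i).
Proof.
rewrite /mxdiag map_mxblock; apply: eq_mxblock => i j.
by case: eqVneq => [<-|_]; rewrite ?map_mx0 ?conform_mx_id.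
Qed.

Lemma is_eigenvalue_ublock_ul n1 n2 (P : 'M[R]_n1) Q (S : 'M[R]_n2) z :
  is_eigenvalue P z -> is_eigenvalue (block_mx P Q 0 S) z.
Proof.
move=> /is_eigenvalueP [w Pw w0]; apply/is_eigenvalueP; exists (col_mx w 0).
  rewrite map_block_mx map_mx0 mul_block_col !mulmx0 mul0mx !addr0 Pw.
  by rewrite scale_col_mx scaler0.
by rewrite -col_mx0; apply: contra w0 => /eqP /eq_col_mx [-> _].
Qed.

Lemma is_eigenvalue_ublock n1 n2 (P : 'M[R]_n1) Q (S : 'M[R]_n2) z :
  is_eigenvalue (block_mx P Q 0 S) z -> is_eigenvalue P z \/ is_eigenvalue S z.
Proof.
move=> /is_eigenvalueP [w]; rewrite -[w]vsubmxK map_block_mx map_mx0 mul_block_col.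
rewrite mul0mx add0r scale_col_mx => /eq_col_mx [Pw Sw] w0.
have [d0 | d0] := eqVneq (dsubmx w) 0; [left | right]; apply/is_eigenvalueP.
  exists (usubmx w); first by rewrite -Pw d0 mulmx0 addr0.
  by apply: contra w0 => /eqP ->; rewrite d0 col_mx0.
by exists (dsubmx w).
Qed.

Lemma is_eigenvalue_mxdiag N (p_ : 'I_N -> nat) (B : forall i, 'M[R]_(p_ i)) z :
  is_eigenvalue (\mxdiag_i B i) z <-> exists i, is_eigenvalue (B i) z.
Proof.
split=> [/is_eigenvalueP [w Aw w0] | [i /is_eigenvalueP [w Bw w0]]].
  have Bw i : map_mx rc (B i) *m submxcol w i = z *: submxcol w i.
    by rewrite -submxcolZ -Aw -{2}(submxcolK w) map_mxdiag mul_mxdiag_mxcol mxcolK.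
  have [i wi0] := submxcol_neq0 w0.
  by exists i; apply/is_eigenvalueP; exists (submxcol w i).
apply/is_eigenvalueP; exists (\mxcol_j if j == i then conform_mx 0 w else 0).
  apply/mxcolP => j; rewrite map_mxdiag mul_mxdiag_mxcol submxcolZ !mxcolK.
  by case: eqVneq => [->|]; rewrite ?conform_mx_id ?mulmx0 ?scaler0.
apply: contra w0 => /eqP /(congr1 (fun M => submxcol M i)).
by rewrite mxcolK eqxx conform_mx_id submxcol0 => ->.
Qed.

Lemma hurwitz_ublock n1 n2 (P : 'M[R]_n1) Q (S : 'M[R]_n2) :
  hurwitz P -> hurwitz S -> hurwitz (block_mx P Q 0 S).
Proof. by move=> hP hS z /is_eigenvalue_ublock [/hP | /hS]. Qed.

Lemma hurwitz_ublock_ul n1 n2 (P : 'M[R]_n1) Q (S : 'M[R]_n2) :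
  hurwitz (block_mx P Q 0 S) -> hurwitz P.
Proof. by move=> hPS z /(is_eigenvalue_ublock_ul Q S) /hPS. Qed.

Lemma hurwitz_mxdiag N (p_ : 'I_N -> nat) (B : forall i, 'M[R]_(p_ i)) :
  hurwitz (\mxdiag_i B i) <-> forall i, hurwitz (B i).
Proof.
split=> [hB i z Bz | hB z /is_eigenvalue_mxdiag [i /hB //]].
by apply: hB; apply/is_eigenvalue_mxdiag; exists i.
Qed.
End Spectrum.

Section Depth.
Variables (T : finType) (e : rel T) (x0 : T).
Hypothesis x0_reaches : forall a, connect e x0 a.

Fixpoint reach_within k : {set T} :=
  if k is k'.+1 then reach_within k' :|: [set a | [exists b in reach_within k', e b a]]
  else [set x0].

Lemma reach_within_last p x k : x \in reach_within k -> path e x p ->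
  last x p \in reach_within (k + size p).
Proof.
elim: p x k => [|y p IHp] x k /=; first by rewrite addn0.
move=> xk /andP [xy yp]; rewrite addnS -addSn; apply: IHp yp.
by rewrite /= in_setU inE; apply/orP; right; apply/existsP; exists x; rewrite xk.
Qed.

Lemma reach_within_mono k k' : (k <= k')%N -> reach_within k \subset reach_within k'.
Proof.
move=> /subnK <-; elim: (k' - k)%N => [|j IHj] //=.
exact: subset_trans IHj (subsetUl _ _).
Qed.

Lemma reach_within_card a : a \in reach_within #|T|.-1.
Proof.
have [p p_path ->] := connectP (x0_reaches a).
case: (shortenP p_path) => q q_path q_uniq _.
have := @reach_within_last q x0 0 (set11 x0) q_path; rewrite add0n.
apply/subsetP/reach_within_mono; have T_gt0 : (0 < #|T|)%N by apply/card_gt0P; exists x0.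
by rewrite -ltnS prednK //; have := max_card (mem (x0 :: q)); rewrite (card_uniqP q_uniq).
Qed.

Definition depth a :=
  ex_minn (ex_intro (fun k => a \in reach_within k) _ (reach_within_card a)).

Lemma depth_reach a : a \in reach_within (depth a).
Proof. by rewrite /depth; case: ex_minnP. Qed.

Lemma depth_min a k : a \in reach_within k -> (depth a <= k)%N.
Proof. by rewrite /depth; case: ex_minnP => d _ min_d /min_d. Qed.

Lemma depth_lt_card a : (depth a < #|T|)%N.
Proof.
apply: leq_ltn_trans (depth_min (reach_within_card a)) _.
by rewrite prednK //; apply/card_gt0P; exists a.
Qed.

Lemma depth_root : depth x0 = 0%N.
Proof. by apply/eqP; rewrite -leqn0 depth_min // inE. Qed.

Lemma depth_parent a : a != x0 -> exists2 b, e b a & (depth b < depth a)%N.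
Proof.
move=> a_x0; have := depth_reach a; case Ea: (depth a) => [|k].
  by rewrite inE (negbTE a_x0).
rewrite /= in_setU => /orP [ak | ].
  by have := depth_min ak; rewrite Ea ltnn.
by rewrite inE => /existsP [b /andP [bk eba]]; exists b; rewrite // ltnS depth_min.
Qed.
End Depth.

Definition depth_ratio (R : rcfType) (N : nat) (eps1 eps2 : R) :=
  eps1 / (2 * (N.+1)%:R * eps2).

Definition dominance_margin (R : rcfType) (N : nat) (eps1 eps2 : R) :=
  eps1 / 2 * depth_ratio N eps1 eps2 ^+ N.

Section TreePotential.
Variables (R : rcfType) (N : nat) (eps1 eps2 : R).
Hypotheses (eps1_gt0 : 0 < eps1) (eps1_le2 : eps1 <= eps2).
Local Notation r := (depth_ratio N eps1 eps2).

Lemma eps2_gt0 : 0 < eps2. Proof. exact: lt_le_trans eps1_le2. Qed.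

Lemma depth_ratio_gt0 : 0 < r.
Proof. by rewrite divr_gt0 // !mulr_gt0 // eps2_gt0. Qed.

Lemma depth_ratio_lt1 : r < 1.
Proof.
rewrite ltr_pdivrMr ?mul1r ?mulr_gt0 ?eps2_gt0 //.
have : eps2 <= (N.+1)%:R * eps2 by rewrite ler_peMl ?ler1n ?ltW ?eps2_gt0.
rewrite -mulrA; have := eps2_gt0; have := eps1_le2; lra.
Qed.

Lemma depth_ratio_margin : r * ((N.+1)%:R * eps2) = eps1 / 2.
Proof.
by rewrite /depth_ratio; field; rewrite gt_eqF ?eps2_gt0 //= addrC natr1 pnatr_eq0.
Qed.

Lemma dominance_margin_gt0 : 0 < dominance_margin N eps1 eps2.
Proof. by rewrite mulr_gt0 ?exprn_gt0 ?depth_ratio_gt0 ?divr_gt0. Qed.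

Lemma admissible_weight_bounds (Ad : 'M[R]_N.+1) a l :
    admissible_graph eps1 eps2 Ad ->
  0 <= Ad a l <= eps2 /\ (0 < Ad a l -> eps1 <= Ad a l).
Proof.
case=> Ad_ge0 Ad_diag _ _ lap_bounds.
have [-> | Ad_neq0] := eqVneq (Ad a l) 0; first by rewrite lexx ltxx ltW ?eps2_gt0.
have a_l : a != l by apply: contraNneq Ad_neq0 => ->; rewrite Ad_diag.
have lapE : aug_laplacian Ad a l = - Ad a l by rewrite mxE (negbTE a_l) mul0r sub0r.
move: (lap_bounds a l); rewrite lapE oppr_eq0 Ad_neq0 normrN ger0_norm //.
by case/(_ isT)/andP => -> ->; rewrite Ad_ge0.
Qed.

Lemma tree_potential (Ad : 'M[R]_N.+1) : admissible_graph eps1 eps2 Ad ->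
  exists g : 'I_N.+1 -> R, g ord0 = 0 /\ forall a, a != ord0 ->
    [/\ 0 < g a, g a <= 1 &
        dominance_margin N eps1 eps2 <= \sum_l Ad a l * (g a - g l)].
Proof.
move=> adm; have [_ _ _ reach _] := adm.
exists (fun a => 1 - r ^+ depth reach a).
split=> [|a a0]; first by rewrite depth_root // subrr.
have r_gt0 := depth_ratio_gt0; have r_lt1 := depth_ratio_lt1.
have rX_anti m n : (m <= n)%N -> r ^+ n <= r ^+ m by move=> ?; rewrite ler_wiXn2l ?ltW.
have [b ba db_lt] := depth_parent reach a0.
have := depth_lt_card reach a; rewrite card_ord ltnS.
move: db_lt; case: (depth reach a) => [//|k] db_le k_lt.
have rk1 : r ^+ k.+1 = r * r ^+ k by rewrite exprS.
have rk_ge0 : 0 <= r ^+ k by rewrite exprn_ge0 ?ltW.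
split.
- by rewrite subr_gt0 exprn_ilt1 ?ltW.
- by rewrite gerBl exprn_ge0 ?ltW.
have Ad_ge0 l : 0 <= Ad a l by case: (admissible_weight_bounds a l adm) => /andP[].
have Ad_le l : Ad a l <= eps2 by case: (admissible_weight_bounds a l adm) => /andP[].
have parent_term : eps1 * r ^+ k <= \sum_l Ad a l * r ^+ depth reach l.
  rewrite (bigD1 b) //= -[X in X <= _]addr0 lerD //.
    have [_ Ad_pos] := admissible_weight_bounds a b adm.
    by apply: ler_pM; [exact: ltW | | exact: Ad_pos | exact: rX_anti].
  by apply: sumr_ge0 => l _; rewrite mulr_ge0 ?exprn_ge0 // ltW.
have degree_le : \sum_l Ad a l <= (N.+1)%:R * eps2.
  rewrite -[X in _ <= X%:R * _]card_ord mulr_natl -sumr_const.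
  by apply: ler_sum => l _; exact: Ad_le.
have -> : \sum_l Ad a l * ((1 - r ^+ k.+1) - (1 - r ^+ depth reach l)) =
    \sum_l Ad a l * r ^+ depth reach l - (\sum_l Ad a l) * r ^+ k.+1.
  by rewrite mulr_suml -sumrB; apply: eq_bigr => l _; ring.
have : dominance_margin N eps1 eps2 <= eps1 / 2 * r ^+ k.
  by rewrite ler_pM2l ?divr_gt0 // rX_anti // ltnW.
have : (\sum_l Ad a l) * r ^+ k.+1 <= eps1 / 2 * r ^+ k.
  by rewrite -depth_ratio_margin rk1 mulrA ler_wpM2r // mulrC ler_wpM2l // ltW.
have := parent_term; lra.
Qed.
End TreePotential.

Section ComplexModulus.
Variable R : rcfType.

Lemma normc_ge0 (x : R[i]) : 0 <= normc x.
Proof. exact: (@normr_ge0 _ (Rcomplex R)). Qed.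

Lemma normc_gt0 (x : R[i]) : (0 < normc x) = (x != 0).
Proof. exact: (@normr_gt0 _ (Rcomplex R)). Qed.

Lemma normc_sum (I : finType) (F : I -> R[i]) :
  normc (\sum_i F i) <= \sum_i normc (F i).
Proof. exact: (@ler_norm_sum _ (Rcomplex R)). Qed.

Lemma normc_real (k : R) : normc (real_complex R k) = `|k|.
Proof. by rewrite /normc /= expr0n addr0 sqrtr_sqr. Qed.

Lemma Re_le_normc (x : R[i]) : complex.Re x <= normc x.
Proof.
case: x => a b /=; apply: le_trans (ler_norm a) _.
by rewrite -sqrtr_sqr ler_wsqrtr // lerDl sqr_ge0.
Qed.

Lemma scaled_argmax (I : finType) (w : I -> R[i]) (g : I -> R) :
  (forall i, 0 < g i) -> (exists i, w i != 0) ->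
  exists i, 0 < normc (w i) /\ forall j, normc (w j) * g i <= normc (w i) * g j.
Proof.
move=> g_gt0 [i0 wi0].
have [i _ max_i] := @arg_maxP _ _ _ i0 xpredT (fun i => normc (w i) / g i) isT.
have scaled_le j : normc (w j) * g i <= normc (w i) * g j.
  have : normc (w j) / g j <= normc (w i) / g i := max_i j isT.
  by rewrite ler_pdivrMr // mulrAC ler_pdivlMr.
exists i; split=> //; have := scaled_le i0.
rewrite -normc_gt0 in wi0; have := g_gt0 i; have := g_gt0 i0; nra.
Qed.
End ComplexModulus.

Definition observer_mx (R : rcfType) (N q : nat) (S : 'M[R]_q) (mu : R)
    (Ad : 'M[R]_N.+1) : 'M[R]_(\sum_(i < N) q) :=
  \mxblock_(i < N, j < N) ((i == j)%:R *: S - (mu * Hmat Ad i j) *: (1%:M : 'M[R]_q)).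

Definition mx_abs_sum (R : numDomainType) m n (A : 'M[R]_(m, n)) :=
  \sum_i \sum_j `|A i j|.

Lemma mx_abs_sum_ge0 (R : numDomainType) m n (A : 'M[R]_(m, n)) : 0 <= mx_abs_sum A.
Proof. by rewrite sumr_ge0 // => i _; rewrite sumr_ge0. Qed.

Lemma mx_abs_sum_row_le (R : numDomainType) m n (A : 'M[R]_(m, n)) i :
  \sum_j `|A i j| <= mx_abs_sum A.
Proof.
rewrite /mx_abs_sum [leRHS](bigD1 i) //= lerDl.
by rewrite sumr_ge0 // => k _; rewrite sumr_ge0.
Qed.

Definition coupling_threshold (R : rcfType) (N q : nat) (S : 'M[R]_q) (eps1 eps2 : R) :=
  (mx_abs_sum S + 1) / dominance_margin N eps1 eps2.

Lemma sum_mulrB_lift0 (R : pzRingType) N (a g : 'I_N.+1 -> R) x : g ord0 = 0 ->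
  \sum_k a k * (x - g k) =
    (\sum_k a k) * x - \sum_(j < N) a (lift ord0 j) * g (lift ord0 j).
Proof.
move=> g0; rewrite [X in _ - X](_ : _ = \sum_k a k * g k); last first.
  by rewrite big_ord_recl g0 mulr0 add0r.
by rewrite mulr_suml -sumrB; apply: eq_bigr => k _; rewrite mulrBr.
Qed.

Section ObserverSpectrum.
Variables (R : rcfType) (N q : nat) (S : 'M[R]_q) (mu : R) (Ad : 'M[R]_N.+1).
Local Notation rc := (real_complex R).
Local Notation follower := (lift ord0).

Lemma observer_eigen_entry (W : 'I_N -> 'cV[R[i]]_q) z :
    map_mx rc (observer_mx S mu Ad) *m \mxcol_j W j = z *: \mxcol_j W j ->
  forall i l, (z + rc (mu * \sum_k Ad (follower i) k)) * W i l 0 =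
    \sum_b rc (S l b) * W i b 0 + \sum_j rc (mu * Ad (follower i) (follower j)) * W j l 0.
Proof.
move=> eig i l; move: (congr1 (fun M => submxcol M i) eig).
rewrite map_mxblock mul_mxblock_mxrow submxcolZ !mxcolK.
under eq_bigr => j _ do
  rewrite map_mxB !map_mxZ map_scalar_mx rmorph1 mulmxBl -!scalemxAl mul1mx.
rewrite sumrB (bigD1 i) //= eqxx rmorph1 scale1r big1 ?addr0; last first.
  by move=> j; rewrite eq_sym => /negbTE ->; rewrite rmorph0 scale0r.
under eq_bigr => j _ do
  rewrite /Hmat !mxE (inj_eq (@lift_inj _ ord0)) mulrBr mulrA rmorphB scalerBl.
(* Naming the degree keeps [bigD1] below off its inner sum. *)
set d := \sum_k Ad (follower i) k.
rewrite sumrB (bigD1 i) //= eqxx mulr1 big1 ?addr0; last first.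
  by move=> j; rewrite eq_sym => /negbTE ->; rewrite mulr0 mul0r rmorph0 scale0r.
move/matrixP/(_ l 0); rewrite !mxE summxE => eq_il.
rewrite mulrDl -eq_il opprB addrA subrK.
by congr (_ + _); apply: eq_bigr => j _; rewrite !mxE.
Qed.

Lemma observer_row_estimate (W : 'I_N -> 'cV[R[i]]_q) z (g : 'I_N.+1 -> R) i l :
    map_mx rc (observer_mx S mu Ad) *m \mxcol_j W j = z *: \mxcol_j W j ->
    0 <= mu -> (forall k, 0 <= Ad (follower i) k) ->
    0 <= g (follower i) -> 0 < normc (W i l 0) ->
    (forall j b, normc (W j b 0) * g (follower i) <= normc (W i l 0) * g (follower j)) ->
  (complex.Re z + mu * \sum_k Ad (follower i) k) * g (follower i) <=
    mx_abs_sum S * g (follower i) +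
    mu * \sum_j Ad (follower i) (follower j) * g (follower j).
Proof.
move=> eig mu_ge0 Ad_ge0 xi_ge0 M_gt0 W_le.
set M := normc (W i l 0) in M_gt0 W_le *; set xi := g (follower i) in xi_ge0 W_le *.
set d := \sum_k _.
rewrite -(ler_pM2r M_gt0).
have Re_le : complex.Re z + mu * d <= normc (z + rc (mu * d)).
  by apply: le_trans (Re_le_normc _); rewrite raddfD /=.
apply: le_trans (_ : normc (z + rc (mu * d)) * M * xi <= _).
  by rewrite mulrAC ler_wpM2r // ler_wpM2r // normc_ge0.
rewrite -normcM observer_eigen_entry // mulrDl.
apply: le_trans (ler_wpM2r xi_ge0 (le_normcD _ _)) _; rewrite mulrDl lerD //.
  apply: le_trans (ler_wpM2r xi_ge0 (normc_sum _)) _; rewrite mulr_suml.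
  apply: le_trans (_ : \sum_b `|S l b| * (M * xi) <= _); last first.
    rewrite -mulr_suml -mulrA [M * xi]mulrC ler_wpM2r ?mx_abs_sum_row_le //.
    by rewrite mulr_ge0 // ltW.
  apply: ler_sum => b _; rewrite normcM normc_real -mulrA ler_wpM2l //.
apply: le_trans (ler_wpM2r xi_ge0 (normc_sum _)) _; rewrite mulr_suml mulr_sumr mulr_suml.
apply: ler_sum => j _; rewrite normcM normc_real ger0_norm ?mulr_ge0 //.
by rewrite -!mulrA; do 2!apply: ler_wpM2l => //; rewrite [_ * M]mulrC.
Qed.

Lemma observer_hurwitz eps1 eps2 : 0 < eps1 -> eps1 <= eps2 ->
    admissible_graph eps1 eps2 Ad ->
    coupling_threshold N S eps1 eps2 <= mu ->
  hurwitz (observer_mx S mu Ad).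
Proof.
move=> eps1_gt0 eps1_le2 adm mu_large z /is_eigenvalueP [w eig w0].
rewrite /coupling_threshold in mu_large.
set c := dominance_margin N eps1 eps2 in mu_large; set s := mx_abs_sum S in mu_large.
have c_gt0 : 0 < c := dominance_margin_gt0 N eps1_gt0 eps1_le2.
have s_ge0 : 0 <= s := mx_abs_sum_ge0 S.
have mu_c : s + 1 <= mu * c by rewrite -ler_pdivrMr.
have mu_ge0 : 0 <= mu by rewrite -(pmulr_lge0 _ c_gt0); lra.
have [g [g_root g_follower]] := tree_potential eps1_gt0 eps1_le2 adm.
have follower_neq0 (j : 'I_N) : follower j != ord0 :> 'I_N.+1 by rewrite eq_sym neq_lift.
have g_gt0 j : 0 < g (follower j) by have [] := g_follower _ (follower_neq0 j).
have [i [l Wil]] : exists i l, submxcol w i l 0 != 0.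
  by have [i /matrix_neq0 [l [k]]] := submxcol_neq0 w0; rewrite (ord1 k); exists i, l.
rewrite -[w]submxcolK in eig; set W := submxcol w in eig Wil.
have [[j b] [M_gt0 W_le]] := @scaled_argmax _ _ (fun p : 'I_N * 'I_q => W p.1 p.2 0)
  (fun p => g (follower p.1)) (fun p => g_gt0 p.1) (ex_intro _ (i, l) Wil).
have Ad_ge0 k : 0 <= Ad (follower j) k by case: adm.
have := observer_row_estimate eig mu_ge0 Ad_ge0 (ltW (g_gt0 j)) M_gt0
  (fun j b => W_le (j, b)).
have [xi_gt0 xi_le1] := g_follower _ (follower_neq0 j).
rewrite sum_mulrB_lift0 // -/s -/c.
set G := \sum_(k < N) _; set d := \sum_k _; set xi := g _ in xi_gt0 xi_le1 * => margin row.
have mu_margin : mu * c <= mu * (d * xi - G) := ler_wpM2l mu_ge0 margin.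
have s_xi : s * xi <= s by rewrite ler_piMr.
have : complex.Re z * xi < 0 by lra.
by rewrite pmulr_llt0.
Qed.
End ObserverSpectrum.

Lemma mulmx_feedback_split (R : pzRingType) n m k l (A : 'M[R]_(n, k)) (B : 'M[R]_(n, m))
    (P : 'M[R]_m) (K1 : 'M[R]_(m, k)) (Pi : 'M[R]_(k, l)) (K2 : 'M[R]_(m, l)) :
  (A + B *m (1%:M - P) *m K1) *m Pi + B *m P *m (K1 *m Pi + K2) =
  A *m Pi + B *m (K1 *m Pi + P *m K2).
Proof.
rewrite mulmxDl !mulmxBr !mulmxBl mulmx1 !mulmxDr !mulmxA.
by rewrite -!addrA; congr (_ + _); rewrite !addrA subrK.
Qed.

Section FollowerData.
Variables (R : rcfType) (n m p q T : nat).
Variables (X : 'M[R]_(n, T)) (U : 'M[R]_(m, T)) (Ed : 'M[R]_(p, T)).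
Variables (V : 'M[R]_(q, T)) (D11 : 'M[R]_T) (E : 'M[R]_(n, q)) (F : 'M[R]_(p, q)).
Variable S : 'M[R]_q.

Definition data_regulator (M : 'M[R]_(T, q)) :=
  (X *m D11 - E *m V) *m M = X *m M *m S - E /\ (Ed - F *m V) *m M = - F.

Section Consistent.
Variables (A : 'M[R]_n) (B : 'M[R]_(n, m)) (C : 'M[R]_(p, n)) (D : 'M[R]_(p, m)).
Hypothesis fit : consistent X U Ed V D11 E F A B C D.

Lemma consistent_closed_loop Xp : X *m Xp = 1%:M ->
  (X *m D11 - E *m V) *m Xp = A + B *m (U *m Xp).
Proof. by case: fit => -> _ XXp; rewrite addrK mulmxDl -!mulmxA XXp mulmx1. Qed.

Lemma consistent_data_regulatorP M : data_regulator M <->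
  X *m M *m S = A *m (X *m M) + B *m (U *m M) + E /\
  0 = C *m (X *m M) + D *m (U *m M) + F.
Proof.
rewrite /data_regulator; case: fit => -> ->; rewrite !addrK !mulmxDl -!mulmxA.
split=> [[e1 e2] | [e1 e2]]; first by rewrite e1 e2 subrK addNr.
by split; [rewrite e1 addrK | apply/eqP; rewrite -addr_eq0 -e2].
Qed.

Lemma regulator_solvable_of_data K1 M : data_regulator M ->
  regulator_solvable A B C D E F S K1 ((U - K1 *m X) *m M).
Proof.
move=> /consistent_data_regulatorP reg; exists (X *m M) => /=.
suff -> : K1 *m (X *m M) + (U - K1 *m X) *m M = U *m M by [].
by rewrite mulmxBl mulmxA addrC subrK.
Qed.

Lemma consistent_feedback_split (P : 'M[R]_m) K1 :
    P *m (U - K1 *m X) = U - K1 *m X ->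
  consistent X U Ed V D11 E F (A + B *m (1%:M - P) *m K1) (B *m P)
    (C + D *m (1%:M - P) *m K1) (D *m P).
Proof.
move=> PY; have split_data G H :
    (G + H *m (1%:M - P) *m K1) *m X + H *m P *m U = G *m X + H *m U.
  have := mulmx_feedback_split G H P K1 X (U - K1 *m X).
  by rewrite PY !(addrC (K1 *m X)) !subrK.
by rewrite /consistent; case: fit => -> ->; rewrite !split_data.
Qed.
End Consistent.

Lemma data_regulator_of_split_system A0 B0 C0 D0 Xp (G : 'M[R]_(T, m)) K2 :
    consistent X U Ed V D11 E F A0 B0 C0 D0 -> X *m Xp = 1%:M ->
    let P := (U - U *m Xp *m X) *m G in
    regulator_solvable (A0 + B0 *m (1%:M - P) *m (U *m Xp)) (B0 *m P)
      (C0 + D0 *m (1%:M - P) *m (U *m Xp)) (D0 *m P) E F S (U *m Xp) K2 ->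
  exists M, data_regulator M.
Proof.
move=> fit0 XXp P [Pi /= [reg1 reg2]].
pose M := Xp *m Pi + (1%:M - Xp *m X) *m (G *m K2).
have XM : X *m M = Pi.
  rewrite mulmxDr !(mulmxA X) XXp mul1mx mulmxBr mulmx1 (mulmxA X) XXp mul1mx.
  by rewrite subrr mul0mx addr0.
have UM : U *m M = U *m Xp *m Pi + P *m K2.
  by rewrite mulmxDr !(mulmxA U) mulmxBr mulmx1 (mulmxA U) /P mulmxA.
exists M; apply/(consistent_data_regulatorP fit0); rewrite XM UM.
by rewrite -!mulmx_feedback_split.
Qed.
End FollowerData.

Definition leader_star (R : numDomainType) (N : nat) (a : R) : 'M[R]_N.+1 :=
  \matrix_(k, l) if (k != ord0) && (l == ord0) then a else 0.

Lemma leader_star_admissible (R : rcfType) N (eps1 eps2 : R) :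
  0 < eps1 -> eps1 <= eps2 -> admissible_graph eps1 eps2 (leader_star N eps1).
Proof.
move=> eps1_gt0 eps1_le2; split.
- by move=> k l; rewrite mxE; case: ifP => // _; rewrite ltW.
- by move=> k; rewrite mxE andNb.
- by move=> l; rewrite mxE eqxx.
- move=> k; have [-> | k0] := eqVneq k ord0; first exact: connect0.
  by apply: connect1; rewrite /= mxE k0 eqxx.
move=> k l; rewrite mxE.
have -> : \sum_l' leader_star N eps1 k l' = if k != ord0 then eps1 else 0.
  rewrite (bigD1 ord0) //= big1 ?addr0; first by rewrite mxE eqxx andbT.
  by move=> j /negbTE j0; rewrite mxE j0 andbF.
rewrite mxE; have [-> | k0] := eqVneq k ord0; first by rewrite mulr0 subrr eqxx.
have [<- | k_l] := eqVneq k l.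
  by rewrite /= (negbTE k0) mul1r subr0 ger0_norm ?lexx // ltW.
by case: (l == ord0); rewrite /= mul0r sub0r ?oppr0 ?eqxx // normrN ger0_norm ?lexx // ltW.
Qed.

Section Network.
Variables (R : rcfType) (N p q T : nat) (n m : 'I_N -> nat).
Variables (X : forall i, 'M[R]_(n i, T)) (U : forall i, 'M[R]_(m i, T)).
Variables (Ed : 'I_N -> 'M[R]_(p, T)) (V : 'M[R]_(q, T)) (D11 : 'M[R]_T).
Variables (E : forall i, 'M[R]_(n i, q)) (F : 'I_N -> 'M[R]_(p, q)) (S : 'M[R]_q).
Variables (eps1 eps2 : R).
Hypotheses (eps1_gt0 : 0 < eps1) (eps1_le2 : eps1 <= eps2).

Lemma gains_work_of_data mu (Xp : forall i, 'M[R]_(T, n i)) (M : forall i, 'M[R]_(T, q)) :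
    coupling_threshold N S eps1 eps2 <= mu ->
    (forall i, [/\ X i *m Xp i = 1%:M,
                   hurwitz ((X i *m D11 - E i *m V) *m Xp i),
                   (X i *m D11 - E i *m V) *m M i = X i *m M i *m S - E i &
                   (Ed i - F i *m V) *m M i = - F i]) ->
  gains_work X U Ed V D11 E F S eps1 eps2 mu Xp
    (fun i => (U i - (U i *m Xp i) *m X i) *m M i).
Proof.
move=> mu_large data; split=> [i | Ad A B C D adm fit]; first by case: (data i).
split=> [|i]; last by case: (data i) => _ _ reg1 reg2; exact: regulator_solvable_of_data.
apply: hurwitz_ublock; last exact: observer_hurwitz mu_large.
apply/hurwitz_mxdiag => i; case: (data i) => XXp data_hurwitz _ _.
by rewrite -(consistent_closed_loop (fit i) XXp).
Qed.

Lemma data_conditions_of_informative mu :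
    (exists (A0 : forall i, 'M[R]_(n i)) (B0 : forall i, 'M[R]_(n i, m i))
            (C0 : forall i, 'M[R]_(p, n i)) (D0 : forall i, 'M[R]_(p, m i)),
       forall i, consistent (X i) (U i) (Ed i) V D11 (E i) (F i)
                            (A0 i) (B0 i) (C0 i) (D0 i)) ->
    informative X U Ed V D11 E F S eps1 eps2 mu ->
  forall i, exists Xp : 'M[R]_(T, n i),
    [/\ X i *m Xp = 1%:M,
        hurwitz ((X i *m D11 - E i *m V) *m Xp) &
        exists M, data_regulator (X i) (Ed i) V D11 (E i) (F i) S M].
Proof.
move=> [A0 [B0 [C0 [D0 fit]]]] [Xp [K2 [XXp works]]] i.
have star := leader_star_admissible N eps1_gt0 eps1_le2.
exists (Xp i); split=> //.
  have [cl_hurwitz _] := works _ _ _ _ _ star fit.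
  rewrite (consistent_closed_loop (fit i) (XXp i)).
  by move/hurwitz_ublock_ul/hurwitz_mxdiag: cl_hurwitz.
pose P j := (U j - U j *m Xp j *m X j) *m pinvmx (U j - U j *m Xp j *m X j).
have fit_split j :=
  consistent_feedback_split (fit j) (mulmxKpV (submx_refl _) : P j *m _ = _).
have [_ reg] := works _ _ _ _ _ star fit_split.
exact: data_regulator_of_split_system (fit i) (XXp i) (reg i).
Qed.
End Network.

Theorem theorem5 (R : rcfType) (N p q T : nat) (n m : 'I_N -> nat)
    (X : forall i, 'M[R]_(n i, T)) (U : forall i, 'M[R]_(m i, T))
    (Ed : forall i, 'M[R]_(p, T)) (V : 'M[R]_(q, T)) (D11 : 'M[R]_T)
    (E : forall i, 'M[R]_(n i, q)) (F : forall i, 'M[R]_(p, q)) (S : 'M[R]_q)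
    (eps1 eps2 : R) :
  0 < eps1 -> eps1 <= eps2 ->
  no_stable_eig S ->
  (* exact data: generated by some true system *)
  (exists (A0 : forall i, 'M[R]_(n i)) (B0 : forall i, 'M[R]_(n i, m i))
          (C0 : forall i, 'M[R]_(p, n i)) (D0 : forall i, 'M[R]_(p, m i)),
     forall i, consistent (X i) (U i) (Ed i) V D11 (E i) (F i)
                          (A0 i) (B0 i) (C0 i) (D0 i)) ->
  exists mu0 : R, forall mu : R, mu0 <= mu ->
    (informative X U Ed V D11 E F S eps1 eps2 mu <->
     forall i : 'I_N,
       exists Xp : 'M[R]_(T, n i),
         [/\ X i *m Xp = 1%:M,
             hurwitz ((X i *m D11 - E i *m V) *m Xp) &
             exists M : 'M[R]_(T, q),
               (X i *m D11 - E i *m V) *m M = X i *m M *m S - E i /\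
               (Ed i - F i *m V) *m M = - F i]) /\
    (forall (Xp : forall i, 'M[R]_(T, n i)) (M : forall i, 'M[R]_(T, q)),
       (forall i,
          [/\ X i *m Xp i = 1%:M,
              hurwitz ((X i *m D11 - E i *m V) *m Xp i),
              (X i *m D11 - E i *m V) *m M i = X i *m M i *m S - E i &
              (Ed i - F i *m V) *m M i = - F i]) ->
       gains_work X U Ed V D11 E F S eps1 eps2 mu Xp
         (fun i => (U i - (U i *m Xp i) *m X i) *m M i)).
Proof.
move=> eps1_gt0 eps1_le2 _ exact_data.
exists (coupling_threshold N S eps1 eps2) => mu mu_large.
split; last by move=> Xp M; apply: gains_work_of_data.
split; first exact: data_conditions_of_informative.
move=> data; have [Xp data_Xp] := fin_all_exists data.
have [M data_M] := fin_all_exists (fun i => let: And3 _ _ reg := data_Xp i in reg).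
exists Xp, (fun i => (U i - (U i *m Xp i) *m X i) *m M i).
apply: gains_work_of_data => // i.
by case: (data_Xp i) (data_M i) => XXp hurw _ [reg1 reg2].
Qed.
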